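(* Let $G=P_n$ be a path on $n\ge3$ vertices, and let $L$ be a list-assignment with $|L(v)|\ge\deg(v)+1$ for all $v\in V(G)$. If $\alpha$ and $\beta$ are both unfrozen $L$-colourings and $\left|\bigcup_{v\in V(G)}L(v)\right|\ge4$, then $\alpha\sim\beta$.
   Context: An $L$-colouring is a proper colouring $\varphi$ with $\varphi(v)\in L(v)$ for all $v$. A vertex $v$ is frozen under $\varphi$ if every colour of $L(v)\setminus\{\varphi(v)\}$ appears on a neighbour of $v$; a colouring is unfrozen if at least one vertex is not frozen. $\alpha\sim\beta$ means $\alpha$ can be transformed into $\beta$ by a sequence of single-vertex recolouring steps, each keeping the colouring a proper $L$-colouring. *)

From mathcomp Require Import all_boot.
From Stdlib Require Import Relation_Operators.
Set Implicit Arguments. Unset Strict Implicit. Unset Printing Implicit Defensive.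

Definition path_adj (n : nat) (i j : 'I_n) : bool :=
  (i.+1 == j :> nat) || (j.+1 == i :> nat).

Definition path_deg (n : nat) (v : 'I_n) : nat := #|[pred u : 'I_n | path_adj v u]|.

(* A list assignment: each vertex gets a finite list of colours (natural numbers);
   |L(v)| is the number of distinct colours in L v. *)
Definition list_size (s : seq nat) : nat := size (undup s).

Definition union_size (n : nat) (L : 'I_n -> seq nat) : nat :=
  size (undup (flatten [seq L v | v <- enum 'I_n])).

Definition is_Lcol (n : nat) (L : 'I_n -> seq nat) (phi : 'I_n -> nat) : Prop :=
  (forall v, phi v \in L v) /\ (forall u v, path_adj u v -> phi u <> phi v).

Definition frozen (n : nat) (L : 'I_n -> seq nat) (phi : 'I_n -> nat) (v : 'I_n) : Prop :=
  forall c, c \in L v -> c <> phi v -> exists u, path_adj v u /\ phi u = c.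

Definition unfrozen (n : nat) (L : 'I_n -> seq nat) (phi : 'I_n -> nat) : Prop :=
  exists v, ~ frozen L phi v.

Definition recol_step (n : nat) (L : 'I_n -> seq nat) (a b : 'I_n -> nat) : Prop :=
  is_Lcol L a /\ is_Lcol L b /\ exists v, forall u, u <> v -> a u = b u.

Definition reconf (n : nat) (L : 'I_n -> seq nat) (a b : 'I_n -> nat) : Prop :=
  clos_refl_trans_1n ('I_n -> nat) (@recol_step n L) a b.

From mathcomp Require Import all_boot zify.
From Stdlib Require Import Relation_Operators Operators_Properties.
Set Implicit Arguments. Unset Strict Implicit. Unset Printing Implicit Defensive.

(** Induction on the number of vertices, deleting the last vertex w, whose
    neighbour is u.  If some vertex has a spare colour (|L v| >= deg v + 2), any
    two L-colourings are connected: delete an end vertex other than the spare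
    one, first recolouring the rest of the path if the end vertex is blocked.
    Otherwise L w = {c, d} and L u = {c, d, e}; let x be the neighbour of u
    before it.  If c is missing from L x, pushing a free vertex along the path
    steers every unfrozen colouring to one with u coloured c, and those are
    connected by the spare-colour case.  If c, d are in L x, deleting w keeps
    four colours in play, so unfrozen colourings that agree on w are connected
    by induction; a colouring with u coloured e and x free links the two choices
    for w. *)

(** Vertices are 0, ..., n-1 and lists and colourings are functions on [nat];
    their values outside 0, ..., n-1 are irrelevant and a [step] may change them. *)

Definition nbrs (n v : nat) : seq nat :=
  (if 0 < v then [:: v.-1] else [::]) ++ (if v.+1 < n then [:: v.+1] else [::]).

Definition colouring n (L : nat -> seq nat) (f : nat -> nat) : Prop :=
  (forall v, v < n -> f v \in L v) /\ (forall v, v.+1 < n -> f v != f v.+1).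

Definition free n (L : nat -> seq nat) (f : nat -> nat) (v : nat) : bool :=
  has (fun z => (z != f v) && (z \notin map f (nbrs n v))) (L v).

Definition has_free n L f : Prop := exists2 v, v < n & free n L f v.

Definition step n L (a b : nat -> nat) : Prop :=
  [/\ colouring n L a, colouring n L b & exists v, forall u, u < n -> u != v -> a u = b u].

Definition reach n L : (nat -> nat) -> (nat -> nat) -> Prop := clos_refl_trans _ (step n L).

Definition recolourable n L : Prop :=
  forall a b, colouring n L a -> colouring n L b -> reach n L a b.

Definition deg_lists n (L : nat -> seq nat) : Prop :=
  forall v, v < n -> size (nbrs n v) < list_size (L v).

Definition slack_at n (L : nat -> seq nat) (s : nat) : bool :=
  (size (nbrs n s)).+1 < list_size (L s).

Definition four_colours n (L : nat -> seq nat) : Prop :=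
  exists s : seq nat, [/\ uniq s, 4 <= size s & forall z, z \in s -> exists2 v, v < n & z \in L v].

Definition recol (f : nat -> nat) (v c : nat) : nat -> nat :=
  fun i => if i == v then c else f i.

Definition forbid (L : nat -> seq nat) (u c : nat) : nat -> seq nat :=
  fun i => if i == u then filter (predC1 c) (L i) else L i.

Definition mirror {A} (n : nat) (f : nat -> A) : nat -> A := fun i => f (n.-1 - i).

Lemma size_nbrs n v : size (nbrs n v) = (0 < v) + (v.+1 < n).
Proof. by rewrite /nbrs; case: (0 < v); case: (v.+1 < n). Qed.

Lemma mem_nbrs n u v : (u \in nbrs n v) = (u.+1 == v) || (v.+1 == u) && (u < n).
Proof. by rewrite /nbrs mem_cat; case: ifP; case: ifP; rewrite ?inE ?in_nil /=; lia. Qed.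

Lemma nbrs_uniq n v : uniq (nbrs n v).
Proof. by rewrite /nbrs; case: ifP; case: ifP => //= _ _; rewrite inE andbT; lia. Qed.

Lemma recolE f v c : recol f v c v = c.
Proof. by rewrite /recol eqxx. Qed.

Lemma recol_ne f v c i : i != v -> recol f v c i = f i.
Proof. by rewrite /recol => /negbTE ->. Qed.

Lemma recol_id f v : recol f v (f v) =1 f.
Proof. by move=> i; rewrite /recol; case: eqP => [->|]. Qed.

Lemma recol_agree_below n f c : {in gtn n, f =1 recol f n c}.
Proof. by move=> i; rewrite inE => /ltn_eqF/negbT/recol_ne ->. Qed.

Lemma colouring_nbrs n L f u v : colouring n L f -> v < n -> u \in nbrs n v -> f u != f v.
Proof.
move=> [_ Hf] vn; rewrite mem_nbrs => /orP [/eqP uv|/andP [/eqP vu un]]; subst.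
  exact: Hf.
by rewrite eq_sym; apply: Hf; lia.
Qed.

Lemma colouring_recol n L f v c : colouring n L f -> c \in L v -> c \notin map f (nbrs n v) ->
  colouring n L (recol f v c).
Proof.
move=> [fL Hf] cL cN; split=> i iN; rewrite /recol.
  by case: eqP => [->|_] //; apply: fL.
have nb u : u \in nbrs n v -> f u != c.
  by move=> un; apply: contraNneq cN => <-; apply: map_f.
case: (eqVneq i v) => [eiv|iv].
  by subst i; rewrite (gtn_eqF (ltnSn v)) eq_sym nb // mem_nbrs; lia.
case: (eqVneq i.+1 v) => [i1v|i1v]; first by rewrite nb // mem_nbrs -i1v; lia.
exact: Hf.
Qed.

Lemma reach_refl n L a : reach n L a a.
Proof. exact: rt_refl. Qed.

Lemma reach_trans n L a b c : reach n L a b -> reach n L b c -> reach n L a c.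
Proof. exact: rt_trans. Qed.

Lemma reach_sym n L a b : reach n L a b -> reach n L b a.
Proof.
elim=> [x y [cx cy [v Hv]]|x|x y z _ Hxy _ Hyz].
- by apply: rt_step; split=> //; exists v => u un uv; rewrite Hv.
- exact: rt_refl.
- exact: rt_trans Hyz Hxy.
Qed.

Lemma reach_map n L n' L' (F : (nat -> nat) -> nat -> nat) a b :
  (forall x y, step n L x y -> step n' L' (F x) (F y)) ->
  reach n L a b -> reach n' L' (F a) (F b).
Proof.
move=> HF; elim=> [x y /HF|x|x y z _ Hxy _ Hyz]; [exact: rt_step|exact: rt_refl|].
exact: rt_trans Hxy Hyz.
Qed.

Lemma colouring_agree n L a b :
  colouring n L a -> {in gtn n, a =1 b} -> colouring n L b.
Proof.
move=> [aL Ha] ab; split=> v vn; first by rewrite -ab //; apply: aL.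
by rewrite -!ab ?inE //; [apply: Ha | lia].
Qed.

Lemma reach_agree n L a b : colouring n L a -> {in gtn n, a =1 b} -> reach n L a b.
Proof.
move=> ca ab; apply: rt_step; split=> //; first exact: colouring_agree ab.
by exists 0 => u un _; apply: ab.
Qed.

Lemma reach_recol n L f v c : colouring n L f -> c \in L v -> c \notin map f (nbrs n v) ->
  reach n L f (recol f v c).
Proof.
move=> cf cL cN; apply: rt_step; split=> //; first exact: colouring_recol.
by exists v => u _ uv; rewrite recol_ne.
Qed.

Lemma reach_single L : recolourable 1 L.
Proof. by move=> a b ca cb; apply: rt_step; split=> //; exists 0 => -[]. Qed.

Lemma fresh_colour (s t : seq nat) : size t < list_size s -> exists2 z, z \in s & z \notin t.
Proof.
move=> lt_ts; apply/hasP; apply: contraLR lt_ts => /hasPn sub_st; rewrite -leqNgt.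
apply: uniq_leq_size (undup_uniq s) _ => z; rewrite mem_undup => /sub_st.
by rewrite negbK.
Qed.

Lemma list_size_subset (s t : seq nat) : {subset s <= t} -> list_size s <= size t.
Proof. by move=> st; apply: uniq_leq_size (undup_uniq s) _ => z; rewrite mem_undup => /st. Qed.

Lemma list_size_eq_mem (s t : seq nat) :
  uniq t -> {subset t <= s} -> list_size s <= size t -> s =i t.
Proof.
move=> ut ts le_st z; have ts' : {subset t <= undup s} by move=> y /ts; rewrite mem_undup.
by have [_ eq_ts] := uniq_min_size ut ts' le_st; rewrite -mem_undup -eq_ts.
Qed.

Lemma list_size_filter1 (s : seq nat) c : list_size s <= (list_size (filter (predC1 c) s)).+1.
Proof.
apply: (list_size_subset (t := c :: undup (filter (predC1 c) s))) => z.
by rewrite inE mem_undup mem_filter /=; case: eqP.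
Qed.

Lemma filter1_notin (s : seq nat) c : c \notin s -> filter (predC1 c) s = s.
Proof. by move=> cs; apply/all_filterP/allP => z zs /=; apply: contraNneq cs => <-. Qed.

Lemma deg_lists_ge2 n L i : deg_lists n L -> 1 < n -> i < n -> 1 < list_size (L i).
Proof. by move=> ok n1 i_n; have := ok i i_n; rewrite size_nbrs; lia. Qed.

Lemma greedy_colouring m L p : (forall i, i < m -> 1 < list_size (L i)) -> p \in L m ->
  exists2 f, colouring m.+1 L f & f m = p.
Proof.
elim: m p => [|m IH] p Hsize pL.
  by exists (fun _ => p) => //; split=> [[]|].
have [q qL qp] := fresh_colour (t := [:: p]) (Hsize m (ltnSn m)).
have [g [gL Hg] gm] := IH q (fun i im => Hsize i (ltnW im)) qL.
exists (recol g m.+1 p); last exact: recolE.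
split=> i im.
  by case: (eqVneq i m.+1) => [->|ne]; rewrite ?recolE ?recol_ne //; apply: gL; lia.
rewrite recol_ne; last by lia.
case: (eqVneq i m) => [->|ne]; first by rewrite recolE gm; rewrite inE in qp.
by rewrite recol_ne; [apply: Hg | ]; lia.
Qed.

Lemma mem_forbid L u c i z : (z \in forbid L u c i) = (z \in L i) && ((i == u) ==> (z != c)).
Proof. by rewrite /forbid; case: eqP; rewrite ?mem_filter ?andbT // andbC. Qed.

Lemma colouring_prefix m n L f : m <= n -> colouring n L f -> colouring m L f.
Proof. by move=> mn [fL Hf]; split=> v vm; [apply: fL | apply: Hf]; lia. Qed.

Lemma colouring_forbid n L f u c : colouring n L f -> f u != c -> colouring n (forbid L u c) f.
Proof.
move=> [fL Hf] fu; split=> // v vn; rewrite mem_forbid fL //.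
by apply/implyP => /eqP ->.
Qed.

Lemma colouring_forbid_last m L a : colouring m.+1 L a -> colouring m (forbid L m.-1 (a m)) a.
Proof.
case: m => [|m] ca; first by split.
by apply: colouring_forbid (colouring_prefix _ ca) (ca.2 m _).
Qed.

Lemma colouring_extend_last m L c a :
  colouring m (forbid L m.-1 c) a -> c \in L m -> colouring m.+1 L (recol a m c).
Proof.
move=> [aL Ha] cL; split=> v vm; rewrite /recol.
  case: eqP => [->|/eqP ne] //.
  by have := aL v; rewrite mem_forbid => /(_ _)/andP [] //; lia.
have vm' : v < m by lia.
rewrite (ltn_eqF vm'); case: (eqVneq v.+1 m) => [vm1|ne]; last by apply: Ha; lia.
by have := aL v vm'; rewrite mem_forbid -vm1 /= eqxx => /andP [].
Qed.

Lemma reach_extend_last m L a b : colouring m.+1 L a -> colouring m.+1 L b -> a m = b m ->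
  reach m (forbid L m.-1 (a m)) a b -> reach m.+1 L a b.
Proof.
move=> ca cb ab r.
have cL : a m \in L m by apply: ca.1.
have ext_step x y : step m (forbid L m.-1 (a m)) x y ->
    step m.+1 L (recol x m (a m)) (recol y m (a m)).
  move=> [cx cy [v Hv]]; split; try exact: colouring_extend_last.
  exists v => u un uv; case: (eqVneq u m) => [->|um]; first by rewrite !recolE.
  by rewrite !recol_ne //; apply: Hv; lia.
apply: reach_trans (reach_trans _ (reach_map ext_step r)) _.
  by apply: reach_agree ca _ => i _; rewrite recol_id.
by apply: reach_sym; apply: reach_agree cb _ => i _; rewrite ab recol_id.
Qed.

Lemma deg_lists_forbid_last m L c : deg_lists m.+1 L -> deg_lists m (forbid L m.-1 c).
Proof.
move=> ok v vm; have := ok v (ltnW vm); have := list_size_filter1 (L v) c.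
rewrite /forbid !size_nbrs; case: eqP => [->|/eqP ne]; lia.
Qed.

Lemma slack_forbid_last m L c s :
  s < m -> slack_at m.+1 L s -> slack_at m (forbid L m.-1 c) s.
Proof.
rewrite /slack_at => sm; have := list_size_filter1 (L s) c.
rewrite /forbid !size_nbrs; case: eqP => [->|/eqP ne]; lia.
Qed.

Lemma free_forbid_last m L f v : v < m -> free m.+1 L f v -> free m (forbid L m.-1 (f m)) f v.
Proof.
move=> vm /hasP [z zL /andP [zf zN]]; apply/hasP; exists z.
  rewrite mem_forbid zL; apply/implyP => /eqP vm1; apply: contraNneq zN => ->.
  by apply: map_f; rewrite mem_nbrs; lia.
rewrite zf; apply: contra zN => /mapP [u un ->]; apply: map_f.
by move: un; rewrite !mem_nbrs; lia.
Qed.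

Lemma size_nbrs_mirror n i : i < n -> size (nbrs n (n.-1 - i)) = size (nbrs n i).
Proof. by move=> i_n; rewrite !size_nbrs; lia. Qed.

Lemma mirrorK {A} n (f : nat -> A) i : i < n -> mirror n (mirror n f) i = f i.
Proof. by move=> i_n; rewrite /mirror; congr f; lia. Qed.

Lemma colouring_mirror n L a : colouring n L a -> colouring n (mirror n L) (mirror n a).
Proof.
move=> [aL Ha]; rewrite /mirror; split=> v vn; first by apply: aL; lia.
by rewrite (_ : n.-1 - v = (n.-1 - v.+1).+1) 1?eq_sym ?Ha //; lia.
Qed.

Lemma colouring_unmirror n L a : colouring n (mirror n L) a -> colouring n L (mirror n a).
Proof.
move=> [aL Ha]; rewrite /mirror; split=> v vn.
  by have := aL (n.-1 - v); rewrite /mirror (_ : n.-1 - (n.-1 - v) = v); [apply; lia | lia].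
by rewrite (_ : n.-1 - v = (n.-1 - v.+1).+1) 1?eq_sym ?Ha //; lia.
Qed.

Lemma reach_unmirror n L a b :
  reach n (mirror n L) a b -> reach n L (mirror n a) (mirror n b).
Proof.
apply: reach_map => x y [cx cy [v Hv]]; split; try exact: colouring_unmirror.
by exists (n.-1 - v) => u un uv; rewrite /mirror; apply: Hv; lia.
Qed.

Lemma deg_lists_mirror n L : deg_lists n L -> deg_lists n (mirror n L).
Proof. by move=> ok v vn; rewrite /mirror -(size_nbrs_mirror vn); apply: ok; lia. Qed.

Lemma nbrs_last m : nbrs m.+2 m.+1 = [:: m].
Proof. by rewrite /nbrs /= ltnn. Qed.

Section SlackStep.
Variables (m s : nat) (L : nat -> seq nat).
Hypotheses (IH : forall L' s', s' < m.+1 -> deg_lists m.+1 L' -> slack_at m.+1 L' s' ->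
                               recolourable m.+1 L')
           (ok : deg_lists m.+2 L) (sm : s <= m) (sl : slack_at m.+2 L s).

Lemma recolourable_forbid_last c : recolourable m.+1 (forbid L m c).
Proof.
by apply: (IH (s' := s)); [lia | exact: deg_lists_forbid_last | exact: slack_forbid_last].
Qed.

Lemma reach_last_colour a c : colouring m.+2 L a -> c \in L m.+1 ->
  exists2 a1, reach m.+2 L a a1 & colouring m.+2 L a1 /\ a1 m.+1 = c.
Proof.
move=> ca cL.
have recol_last f : colouring m.+2 L f -> f m != c ->
    exists2 a1, reach m.+2 L f a1 & colouring m.+2 L a1 /\ a1 m.+1 = c.
  move=> cf fmc; have cN : c \notin map f (nbrs m.+2 m.+1) by rewrite nbrs_last /= inE eq_sym.
  exists (recol f m.+1 c); first exact: reach_recol.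
  by split; [exact: colouring_recol | exact: recolE].
case: (eqVneq (a m) c) => [amc|]; last exact: recol_last.
set aw := a m.+1.
have [p pL] : exists2 p, p \in L m & p \notin [:: c; aw].
  apply: fresh_colour; have := ok (leqnSn m.+1); move: sl; rewrite /slack_at !size_nbrs /=.
  by case: (ltngtP s m) => [sm'|//|->]; lia.
rewrite !inE negb_or => /andP [pc pw].
have [f cf fm] : exists2 f, colouring m.+1 L f & f m = p.
  by apply: greedy_colouring pL => i im; apply: deg_lists_ge2 ok _ _; lia.
have cfw : colouring m.+1 (forbid L m aw) f by apply: colouring_forbid cf _; rewrite fm.
have cg : colouring m.+2 L (recol f m.+1 aw) by apply: colouring_extend_last cfw _; apply: ca.1.
have r : reach m.+2 L a (recol f m.+1 aw).
  apply: reach_extend_last => //; first by rewrite recolE.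
  apply: recolourable_forbid_last (colouring_forbid_last ca) _.
  exact: colouring_agree cfw (@recol_agree_below _ _ _).
have [a1 r1 ha1] := recol_last _ cg ltac:(by rewrite recol_ne ?fm // (ltn_eqF (ltnSn m))).
by exists a1 => //; exact: reach_trans r r1.
Qed.

Lemma recolourable_slack_step : recolourable m.+2 L.
Proof.
move=> a b ca cb.
have [a1 ra [ca1 a1c]] := reach_last_colour ca (cb.1 _ (ltnSn _)).
have cb1 := colouring_forbid_last cb; rewrite -a1c in cb1.
apply: reach_trans ra _; apply: reach_extend_last => //.
exact: recolourable_forbid_last (colouring_forbid_last ca1) cb1.
Qed.
End SlackStep.

Theorem slack_recolourable n L s : s < n -> deg_lists n L -> slack_at n L s -> recolourable n L.
Proof.
elim: n L s => // -[_ L s _ _ _|m IH L s sn ok sl]; first exact: reach_single.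
case: (ltnP s m.+1) => [sm|]; first exact: (recolourable_slack_step IH ok (s := s)).
move=> le_ms a b ca cb.
have sl0 : slack_at m.+2 (mirror m.+2 L) 0.
  by move: sl; rewrite (_ : s = m.+1) /slack_at /mirror ?size_nbrs /= ?subn0 ?ltnn; lia.
have r := recolourable_slack_step IH (deg_lists_mirror ok) (leq0n m) sl0
            (colouring_mirror ca) (colouring_mirror cb).
apply: reach_trans (reach_trans _ (reach_unmirror r)) _.
  by apply: reach_agree ca _ => i i_n; rewrite mirrorK.
by apply: reach_sym; apply: reach_agree cb _ => i i_n; rewrite mirrorK.
Qed.

Lemma map_uniq_inj_in (T1 T2 : eqType) (f : T1 -> T2) (s : seq T1) :
  uniq (map f s) -> {in s &, injective f}.
Proof.
elim: s => //= x s IH /andP [fxs us] u v; rewrite !inE.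
case/orP=> [/eqP ->|us'] /orP [/eqP ->|vs'] //.
- by move=> fxv; move: fxs; rewrite fxv map_f.
- by move=> fux; move: fxs; rewrite -fux map_f.
- exact: IH.
Qed.

Lemma frozen_nbr_cols n L f y : deg_lists n L -> y < n -> f y \in L y -> ~~ free n L f y ->
  uniq (f y :: map f (nbrs n y)) /\ {subset map f (nbrs n y) <= L y}.
Proof.
move=> ok yn fyL /hasPn frozen.
have sub : {subset undup (L y) <= f y :: map f (nbrs n y)}.
  move=> z; rewrite mem_undup inE => /frozen; rewrite negb_and !negbK.
  by case/orP=> [/eqP ->|->]; rewrite ?eqxx ?orbT.
have le : size (f y :: map f (nbrs n y)) <= size (undup (L y)) by rewrite /= size_map; exact: ok.
have [_ eq_yL] := uniq_min_size (undup_uniq _) sub le.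
split; first exact: leq_size_uniq (undup_uniq _) sub le.
by move=> z zN; rewrite -mem_undup eq_yL inE zN orbT.
Qed.

Lemma free_agree n L f g v :
  f v = g v -> {in nbrs n v, f =1 g} -> free n L f v = free n L g v.
Proof. by move=> fgv /eq_in_map fg; rewrite /free fgv fg. Qed.

Lemma free_spread n L f v y : deg_lists n L -> colouring n L f -> v < n -> y < n ->
  free n L f v -> y \in nbrs n v ->
  exists g, [/\ reach n L f g, colouring n L g, free n L g y & forall i, i != v -> g i = f i].
Proof.
move=> ok cf vn yn fv yv.
have vy : v \in nbrs n y by move: yv; rewrite !mem_nbrs; lia.
case: (boolP (free n L f y)) => [fy|frozen_y]; first by exists f; split=> //; exact: reach_refl.
(* A frozen y sees every colour of L y exactly once, so moving v off f v frees f v at y. *)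
have [/= /andP [_ uniq_y] sub_y] := frozen_nbr_cols ok yn (cf.1 y yn) frozen_y.
case/hasP: fv => z zL /andP [zv zN].
have gy : y != v by apply: contraTneq yv => ->; rewrite mem_nbrs; lia.
exists (recol f v z); split; [exact: reach_recol | exact: colouring_recol | | ].
- apply/hasP; exists (f v); first exact/sub_y/map_f.
  rewrite recol_ne // (colouring_nbrs cf yn vy) /=.
  apply/mapP => -[u uy]; case: (eqVneq u v) => [->|uv].
    by rewrite recolE => /eqP; rewrite eq_sym (negbTE zv).
  by rewrite recol_ne // => /esym/(map_uniq_inj_in uniq_y uy vy)/eqP; rewrite (negbTE uv).
- by move=> i iv; rewrite recol_ne.
Qed.

Lemma free_move_right n L f v w : deg_lists n L -> colouring n L f -> v <= w -> w < n ->
  free n L f v ->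
  exists g, [/\ reach n L f g, colouring n L g, free n L g w & forall i, w <= i -> g i = f i].
Proof.
move=> ok cf; elim: w => [|w IH] vw wn fv.
  by rewrite leqn0 in vw; rewrite -(eqP vw); exists f; split=> //; exact: reach_refl.
case: (eqVneq v w.+1) => [<-|ne]; first by exists f; split=> //; exact: reach_refl.
have [g1 [r1 c1 f1 e1]] := IH ltac:(lia) ltac:(lia) fv.
have [g [r c fg eg]] := free_spread ok c1 (ltnW wn) wn f1 ltac:(rewrite mem_nbrs; lia).
exists g; split=> //; first exact: reach_trans r1 r.
by move=> i wi; rewrite eg ?e1 //; lia.
Qed.

Lemma four_colours_subset n L t : four_colours n L -> (forall v, v < n -> {subset L v <= t}) ->
  4 <= size t.
Proof.
move=> [s [us s4 Hs]] sub; apply: leq_trans s4 (uniq_leq_size us _) => z /Hs [v vn zv].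
exact: sub zv.
Qed.

(** The last three vertices are x = k, u = k+1 and w = k+2. *)
Section Tight.
Variables (k c d e : nat) (L : nat -> seq nat).
Hypotheses (ok : deg_lists k.+3 L) (cd : c != d) (ce : c != e) (de : d != e)
           (Lw : L k.+2 =i [:: c; d]) (Lu : L k.+1 =i [:: c; d; e]).

Lemma nbrs_tight_w : nbrs k.+3 k.+2 = [:: k.+1].
Proof. by rewrite /nbrs /= ltnn. Qed.

Lemma nbrs_tight_u : nbrs k.+3 k.+1 = [:: k; k.+2].
Proof. by rewrite /nbrs /= ltnSn. Qed.

Lemma tight_colour_w f : colouring k.+3 L f -> f k.+2 = c \/ f k.+2 = d.
Proof. by move=> cf; move: (cf.1 k.+2 (ltnSn _)); rewrite Lw !inE => /orP [] /eqP; tauto. Qed.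

Lemma tight_colour_u f : colouring k.+3 L f -> [\/ f k.+1 = c, f k.+1 = d | f k.+1 = e].
Proof.
move=> cf; move: (cf.1 k.+1 (ltnW (ltnSn _))); rewrite Lu !inE.
by case/or3P=> /eqP; [constructor 1 | constructor 2 | constructor 3].
Qed.

Section PrivateColour.
Hypothesis (cx : c \notin L k).

Definition reaches_hub a := exists2 a1, reach k.+3 L a a1 & colouring k.+3 L a1 /\ a1 k.+1 = c.

Lemma reaches_hub_step a b : reach k.+3 L a b -> reaches_hub b -> reaches_hub a.
Proof. by move=> rab [b1 rb1 hb1]; exists b1 => //; exact: reach_trans rab rb1. Qed.

Lemma reaches_hub_recol a v z : colouring k.+3 L a -> z \in L v -> z \notin map a (nbrs k.+3 v) ->
  reaches_hub (recol a v z) -> reaches_hub a.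
Proof. by move=> ca zL zN; apply: reaches_hub_step; exact: reach_recol. Qed.

Lemma hub_of_w_d a : colouring k.+3 L a -> a k.+2 = d -> reaches_hub a.
Proof.
move=> ca aw; case: (eqVneq (a k.+1) c) => [au|au]; first by exists a => //; exact: reach_refl.
have cN : c \notin map a (nbrs k.+3 k.+1).
  rewrite nbrs_tight_u /= !inE aw (negbTE cd) orbF.
  by apply: contraNneq cx => ->; apply: ca.1; lia.
have cu : c \in L k.+1 by rewrite Lu !inE eqxx.
exists (recol a k.+1 c); first exact: reach_recol.
by split; [exact: colouring_recol | exact: recolE].
Qed.

Lemma hub_of_u_e a : colouring k.+3 L a -> a k.+1 = e -> reaches_hub a.
Proof.
move=> ca au; case: (tight_colour_w ca) => aw; last exact: hub_of_w_d.
have dN : d \notin map a (nbrs k.+3 k.+2) by rewrite nbrs_tight_w /= inE au.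
have dw : d \in L k.+2 by rewrite Lw !inE eqxx orbT.
apply: (reaches_hub_recol ca dw dN); apply: hub_of_w_d; [exact: colouring_recol | exact: recolE].
Qed.

Lemma hub_of_x_ne_e a : colouring k.+3 L a -> a k != e -> reaches_hub a.
Proof.
move=> ca ax; case: (tight_colour_w ca) => aw; last exact: hub_of_w_d.
case: (tight_colour_u ca) => [au|au|]; last exact: hub_of_u_e.
  by move: (ca.2 k.+1 (ltnSn _)); rewrite au aw eqxx.
have eN : e \notin map a (nbrs k.+3 k.+1).
  by rewrite nbrs_tight_u /= !inE aw negb_or eq_sym ax eq_sym.
have eu : e \in L k.+1 by rewrite Lu !inE eqxx !orbT.
apply: (reaches_hub_recol ca eu eN); apply: hub_of_u_e; [exact: colouring_recol | exact: recolE].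
Qed.

Lemma hub_of_has_free a : colouring k.+3 L a -> has_free k.+3 L a -> reaches_hub a.
Proof.
move=> ca [v vn fv]; case: (eqVneq (a k) e) => [ax|]; last exact: hub_of_x_ne_e ca.
case: (tight_colour_w ca) => aw; last exact: hub_of_w_d.
have au : a k.+1 = d.
  case: (tight_colour_u ca) => // au.
    by have := ca.2 k.+1 (ltnSn _); rewrite au aw eqxx.
  by have := ca.2 k (leqnSn _); rewrite au ax eqxx.
have vk : v <= k.
  rewrite leqNgt; apply: contraL fv => kv; apply/hasPn => z.
  have [->|->] : v = k.+1 \/ v = k.+2 by lia.
  - by rewrite Lu nbrs_tight_u /= !inE au aw ax => /or3P [] /eqP ->; rewrite !eqxx ?orbT /= ?andbF.
  - by rewrite Lw nbrs_tight_w /= !inE au aw => /orP [] /eqP ->; rewrite !eqxx ?orbT /= ?andbF.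
have [g [rg cg /hasP [z zL /andP [zg zN]] eg]] :=
  free_move_right ok ca vk (leqW (leqW (ltnSn k))) fv.
apply: reaches_hub_step rg _; apply: (reaches_hub_recol cg zL zN).
by apply: hub_of_x_ne_e; [exact: colouring_recol | rewrite recolE -ax -(eg k)].
Qed.

(** Removing w and u leaves x with a spare colour, as c is not in L x. *)
Lemma reach_hub_colourings a b : colouring k.+3 L a -> colouring k.+3 L b ->
  a k.+1 = c -> b k.+1 = c -> reach k.+3 L a b.
Proof.
have hub_w f : colouring k.+3 L f -> f k.+1 = c -> f k.+2 = d.
  move=> cf fu; case: (tight_colour_w cf) => // fw.
  by have := cf.2 k.+1 (ltnSn _); rewrite fu fw eqxx.
move=> ca cb au bu; have ca1 := colouring_forbid_last ca; have cb1 := colouring_forbid_last cb.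
have abw : a k.+2 = b k.+2 by rewrite (hub_w a ca au) (hub_w b cb bu).
rewrite -abw in cb1; apply: reach_extend_last => //.
apply: reach_extend_last => //=; first by rewrite au bu.
apply: (slack_recolourable (s := k)) => //.
- exact/deg_lists_forbid_last/deg_lists_forbid_last.
- rewrite /slack_at /forbid eqxx (ltn_eqF (ltnSn k)) au filter1_notin // size_nbrs.
  by have := ok (leqW (leqW (ltnSn k))); rewrite size_nbrs; lia.
- exact: colouring_forbid_last.
- by rewrite au -bu; exact: colouring_forbid_last.
Qed.

Lemma tight_private_reach a b : colouring k.+3 L a -> colouring k.+3 L b ->
  has_free k.+3 L a -> has_free k.+3 L b -> reach k.+3 L a b.
Proof.
move=> ca cb ua ub.
have [a1 ra [ca1 a1u]] := hub_of_has_free ca ua.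
have [b1 rb [cb1 b1u]] := hub_of_has_free cb ub.
apply: reach_trans ra (reach_trans (reach_hub_colourings ca1 cb1 a1u b1u) _).
exact: reach_sym.
Qed.
End PrivateColour.

Section SharedColours.
Hypotheses (cx : c \in L k) (dx : d \in L k) (un : four_colours k.+3 L)
           (IH : forall L', deg_lists k.+2 L' -> four_colours k.+2 L' ->
                 forall a b, colouring k.+2 L' a -> colouring k.+2 L' b ->
                 has_free k.+2 L' a -> has_free k.+2 L' b -> reach k.+2 L' a b).

Definition free_before_w f := exists2 v, v < k.+2 & free k.+3 L f v.

Lemma reach_free_before_w a : colouring k.+3 L a -> has_free k.+3 L a ->
  exists2 a1, reach k.+3 L a a1 & colouring k.+3 L a1 /\ free_before_w a1.
Proof.
move=> ca [v vn fv]; case: (ltnP v k.+2) => [vw|wv].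
  by exists a; [exact: reach_refl | split=> //; exists v].
have ev : v = k.+2 by lia.
subst v.
have uw : k.+1 \in nbrs k.+3 k.+2 by rewrite nbrs_tight_w inE.
have [g [rg cg fg _]] := free_spread ok ca (ltnSn _) (leqnSn _) fv uw.
by exists g => //; split=> //; exists k.+1.
Qed.

Lemma four_colours_forbid_w c' : c' \in L k -> four_colours k.+2 (forbid L k.+1 c').
Proof.
case: un => s [us s4 Hs] c'x; exists s; split=> // z /Hs [v vn zv].
have [vk|[vu|vw]] : v <= k \/ v = k.+1 \/ v = k.+2 by lia.
- by exists v; [lia | rewrite mem_forbid zv (_ : (v == k.+1) = false) //; lia].
- subst v; case: (eqVneq z c') => [->|zc].
    by exists k; [lia | rewrite mem_forbid c'x (ltn_eqF (ltnSn k))].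
  by exists k.+1; [lia | rewrite mem_forbid zv zc implybT].
- subst v; exists k; [lia | rewrite mem_forbid (ltn_eqF (ltnSn k)) andbT].
  by move: zv; rewrite Lw !inE => /orP [] /eqP ->.
Qed.

Lemma reach_same_w a b : colouring k.+3 L a -> colouring k.+3 L b -> a k.+2 = b k.+2 ->
  free_before_w a -> free_before_w b -> reach k.+3 L a b.
Proof.
move=> ca cb abw [va vaw fa] [vb vbw fb]; apply: reach_extend_last => //.
have awx : a k.+2 \in L k by case: (tight_colour_w ca) => ->.
have cb1 := colouring_forbid_last cb; rewrite -abw in cb1.
apply: IH (colouring_forbid_last ca) cb1 _ _.
- exact: deg_lists_forbid_last.
- exact: four_colours_forbid_w.
- by exists va => //; exact: free_forbid_last.
- by exists vb => //; rewrite abw; exact: free_forbid_last.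
Qed.

(** Recolouring w to d keeps [psi] free at x, so [psi] links the two colours of w. *)
Definition tight_base psi :=
  [/\ colouring k.+3 L psi, psi k.+2 = c, psi k.+1 = e & free k.+3 L psi k].

Lemma tight_base_of_prefix f z : colouring k.+1 L f -> f k != e ->
  z \in L k -> z != f k -> z != e -> (0 < k -> z != f k.-1) -> exists psi, tight_base psi.
Proof.
move=> cf fke zL zf ze zp; set psi := recol (recol f k.+1 e) k.+2 c; exists psi.
have psi_u : psi k.+1 = e by rewrite /psi recol_ne ?recolE //; lia.
have psi_x i : i <= k -> psi i = f i by move=> ik; rewrite /psi !recol_ne //; lia.
have eu : e \in L k.+1 by rewrite Lu !inE eqxx !orbT.
have cw : c \in L k.+2 by rewrite Lw !inE eqxx.
have cf1 : colouring k.+2 L (recol f k.+1 e).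
  exact: colouring_extend_last (colouring_forbid cf fke) eu.
split=> //.
  by apply: colouring_extend_last (colouring_forbid cf1 _) cw; rewrite recolE eq_sym.
  exact: recolE.
apply/hasP; exists z; rewrite // psi_x // zf /=.
apply/mapP => -[u]; rewrite mem_nbrs => uk /eqP; apply/negP.
have [->|[-> k0]] : u = k.+1 \/ u = k.-1 /\ 0 < k by lia.
  by rewrite psi_u.
by rewrite psi_x ?zp //; lia.
Qed.

Lemma tight_prefix_colour j : k = j.+1 -> {subset L k <= [:: c; d; e]} ->
  exists2 q, q \in L j & q \notin [:: c; d].
Proof.
move=> kj Lx; apply/hasP; apply/negPn/negP => /hasPn Lj.
have Ljcd : {subset L j <= [:: c; d]} by move=> z /Lj; rewrite negbK.
have j0 : j = 0.
  by have := ok (_ : j < k.+3); have := list_size_subset Ljcd; rewrite size_nbrs /=; lia.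
suff : 4 <= size [:: c; d; e] by [].
apply: four_colours_subset un _ => v vn z.
have [->|[->|[->|->]]] : v = j \/ v = k \/ v = k.+1 \/ v = k.+2 by lia.
- by move/Ljcd; rewrite !inE => /orP [] ->; rewrite ?orbT.
- exact: Lx.
- by rewrite Lu.
- by rewrite Lw !inE => /orP [] ->; rewrite ?orbT.
Qed.

Lemma exists_tight_base : exists psi, tight_base psi.
Proof.
have ge2 i : i < k -> 1 < list_size (L i) by move=> ik; apply: deg_lists_ge2 ok _ _; lia.
have dc : d != c by rewrite eq_sym.
case: (boolP (has (fun z => z \notin [:: c; d; e]) (L k))) => [/hasP [p pL pN]|/hasPn Lx].
  have [f cf fk] := greedy_colouring ge2 pL.
  have cd2 : size [:: f k.-1] < list_size [:: c; d] by rewrite /list_size /= inE (negbTE cd).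
  have [z zcd zN] := fresh_colour cd2.
  move: pN zcd zN; rewrite !inE !negb_or => /and3P [pc pd pe] zcd zf.
  apply: (tight_base_of_prefix cf (z := z)); rewrite ?fk //.
  - by case/orP: zcd => /eqP ->.
  - by case/orP: zcd => /eqP ->; rewrite eq_sym.
  - by case/orP: zcd => /eqP ->.
have {}Lx : {subset L k <= [:: c; d; e]} by move=> z /Lx; rewrite negbK.
case: (posnP k) => [k0|kpos].
  apply: (tight_base_of_prefix (f := fun=> c) (z := d)) => //.
  by rewrite k0; split=> v; rewrite ltnS ?leqn0 // => /eqP ->; rewrite -k0.
have kj : k = k.-1.+1 by rewrite prednK.
have [q qL qN] := tight_prefix_colour kj Lx.
have [g cg gj] : exists2 g, colouring k.-1.+1 L g & g k.-1 = q.
  by apply: greedy_colouring qL => i ij; apply: ge2; lia.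
rewrite -kj in cg; move: qN; rewrite !inE !negb_or => /andP [qc qd].
have cf : colouring k.+1 L (recol g k c).
  by apply: colouring_extend_last (colouring_forbid cg _) cx; rewrite gj.
apply: (tight_base_of_prefix cf (z := d)); rewrite ?recolE //.
by move=> _; rewrite recol_ne ?gj 1?eq_sym //; lia.
Qed.
Lemma tight_shared_reach a b : colouring k.+3 L a -> colouring k.+3 L b ->
  has_free k.+3 L a -> has_free k.+3 L b -> reach k.+3 L a b.
Proof.
have [psi [cp pw pu fp]] := exists_tight_base.
have dw : d \in L k.+2 by rewrite Lw !inE eqxx orbT.
have dN : d \notin map psi (nbrs k.+3 k.+2) by rewrite nbrs_tight_w /= inE pu.
have fp' : free k.+3 L (recol psi k.+2 d) k.
  have agree : free k.+3 L psi k = free k.+3 L (recol psi k.+2 d) k.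
    by apply: free_agree => [|i]; [|rewrite mem_nbrs => ik]; rewrite recol_ne //; lia.
  by rewrite -agree.
have to_psi a1 : colouring k.+3 L a1 -> free_before_w a1 -> reach k.+3 L a1 psi.
  move=> ca1 fa1; case: (tight_colour_w ca1) => a1w.
    by apply: reach_same_w => //; [rewrite a1w pw | exists k].
  apply: reach_trans (reach_sym (reach_recol cp dw dN)).
  apply: reach_same_w => //; [exact: colouring_recol | by rewrite a1w recolE | by exists k].
move=> ca cb ua ub.
have [a1 ra [ca1 fa1]] := reach_free_before_w ca ua.
have [b1 rb [cb1 fb1]] := reach_free_before_w cb ub.
apply: reach_trans ra (reach_trans (to_psi a1 ca1 fa1) _).
exact/reach_sym/(reach_trans rb)/to_psi.
Qed.

End SharedColours.
End Tight.

Lemma recolourable_private_last m L c :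
  deg_lists m.+2 L -> c \in L m.+1 -> c \notin L m -> recolourable m.+2 L.
Proof.
move=> ok cw cu a b ca cb.
have cN f : colouring m.+2 L f -> c \notin map f (nbrs m.+2 m.+1).
  by move=> cf; rewrite nbrs_last /= inE; apply: contraNneq cu => ->; apply: cf.1.
have ca' := colouring_recol ca cw (cN a ca); have cb' := colouring_recol cb cw (cN b cb).
have cfa := colouring_forbid_last ca'; have cfb := colouring_forbid_last cb'.
rewrite recolE in cfa; rewrite recolE in cfb.
apply: reach_trans (reach_recol ca cw (cN a ca)) _.
apply: reach_trans _ (reach_sym (reach_recol cb cw (cN b cb))).
apply: reach_extend_last => //; rewrite ?recolE //.
apply: (slack_recolourable (s := m)) => //.
- exact: deg_lists_forbid_last.
- rewrite /slack_at /forbid eqxx filter1_notin // size_nbrs.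
  by have := ok m (ltnW (ltnSn m.+1)); rewrite size_nbrs; lia.
Qed.

Lemma tight_lists k L : deg_lists k.+3 L ->
  ~~ slack_at k.+3 L k.+2 -> ~~ slack_at k.+3 L k.+1 -> {subset L k.+2 <= L k.+1} ->
  exists c d e, [/\ c != d, c != e, d != e, L k.+2 =i [:: c; d] & L k.+1 =i [:: c; d; e]].
Proof.
move=> ok; rewrite /slack_at !size_nbrs /= !ltnSn ltnn -!leqNgt => sw su sub.
have := ok _ (ltnSn k.+2); have := ok _ (leqnSn k.+2); rewrite !size_nbrs /= ltnSn ltnn => lu lw.
have [c cw _] := fresh_colour (s := L k.+2) (t := [::]) ltac:(rewrite /=; lia).
have [d dw] := fresh_colour (s := L k.+2) (t := [:: c]) ltac:(rewrite /=; lia).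
rewrite inE eq_sym => cd.
have [e eu] := fresh_colour (s := L k.+1) (t := [:: c; d]) ltac:(rewrite /=; lia).
rewrite !inE negb_or => /andP [ec ed].
have cdw : {subset [:: c; d] <= L k.+2} by move=> z; rewrite !inE => /orP [] /eqP ->.
have cdeu : {subset [:: c; d; e] <= L k.+1}.
  by move=> z; rewrite !inE => /or3P [] /eqP -> //; apply: sub.
have ce : c != e by rewrite eq_sym.
have de : d != e by rewrite eq_sym.
exists c, d, e; split=> //.
- by apply: (list_size_eq_mem _ cdw); rewrite //= inE cd.
- by apply: (list_size_eq_mem _ cdeu); rewrite //= !inE negb_or cd ce de.
Qed.

Lemma two_vertices_few_colours L :
  ~~ slack_at 2 L 0 -> {subset L 1 <= L 0} -> ~ four_colours 2 L.
Proof.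
rewrite /slack_at size_nbrs /= -leqNgt => s0 sub un.
suff : 4 <= list_size (L 0) by lia.
by apply: four_colours_subset un _ => -[|[|v]] vn z //; rewrite mem_undup // => /sub.
Qed.

Theorem has_free_reach n L : 0 < n -> deg_lists n L -> four_colours n L ->
  forall a b, colouring n L a -> colouring n L b -> has_free n L a -> has_free n L b ->
  reach n L a b.
Proof.
case: n => // m _; elim: m L => [|m IH] L ok un a b ca cb ua ub; first exact: reach_single.
have [sw|nsw] := boolP (slack_at m.+2 L m.+1).
  exact: slack_recolourable (ltnSn _) ok sw _ _ ca cb.
have [su|nsu] := boolP (slack_at m.+2 L m).
  exact: slack_recolourable (ltnW (ltnSn _)) ok su _ _ ca cb.
have [sub|/allPn [c cw cu]] := boolP (all (mem (L m)) (L m.+1)); last first.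
  exact: (recolourable_private_last ok cw cu ca cb).
case: m IH ok un ca cb ua ub nsw nsu sub => [|k] IH ok un ca cb ua ub nsw nsu /allP sub.
  by case: (two_vertices_few_colours nsu sub un).
have [c [d [e [cd ce de Lw Lu]]]] := tight_lists ok nsw nsu sub.
have [cx|cx] := boolP (c \in L k); last exact: (tight_private_reach ok cd ce de Lw Lu cx).
have [dx|dx] := boolP (d \in L k).
  exact: (tight_shared_reach ok cd ce de Lw Lu cx dx un IH).
have Lw' : L k.+2 =i [:: d; c] by move=> z; rewrite Lw !inE orbC.
have Lu' : L k.+1 =i [:: d; c; e] by move=> z; rewrite Lu !inE orbCA.
have dc : d != c by rewrite eq_sym.
exact: (tight_private_reach ok dc de ce Lw' Lu' dx).
Qed.

Section Ordinals.
Variables (m : nat) (L : 'I_m.+1 -> seq nat).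

Definition nat_lists : nat -> seq nat := fun i => L (inord i).
Definition nat_col (f : 'I_m.+1 -> nat) : nat -> nat := fun i => f (inord i).
Definition ord_col (f : nat -> nat) : 'I_m.+1 -> nat := fun i => f i.

Lemma path_adj_nbrs (u v : 'I_m.+1) : path_adj v u = ((u : nat) \in nbrs m.+1 v).
Proof. by rewrite mem_nbrs ltn_ord /path_adj andbT orbC. Qed.

Lemma Lcol_ord_col f : colouring m.+1 nat_lists f -> is_Lcol L (ord_col f).
Proof.
move=> cf; split=> [v|u v]; first by have := cf.1 v (ltn_ord v); rewrite /nat_lists inord_val.
by rewrite path_adj_nbrs => /(colouring_nbrs cf (ltn_ord u)); rewrite eq_sym => /eqP.
Qed.

Lemma reconf_ord_col x y :
  reach m.+1 nat_lists x y -> clos_refl_trans _ (@recol_step m.+1 L) (ord_col x) (ord_col y).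
Proof.
elim=> [a b [ca cb [v Hv]]|a|a b c _ Hab _ Hbc].
- apply: rt_step; split; [exact: Lcol_ord_col | split; first exact: Lcol_ord_col].
  exists (inord v) => u uv; apply: Hv; first exact: ltn_ord.
  by apply: contra_not_neq uv => <-; rewrite inord_val.
- exact: rt_refl.
- exact: rt_trans Hab Hbc.
Qed.

Lemma colouring_nat_col f : is_Lcol L f -> colouring m.+1 nat_lists (nat_col f).
Proof.
move=> [fL Hf]; split=> v vn; first exact: fL.
by apply/eqP/Hf; rewrite path_adj_nbrs mem_nbrs !inordK //; lia.
Qed.

Lemma deg_lists_nat_lists :
  (forall v : 'I_m.+1, path_deg v + 1 <= list_size (L v)) -> deg_lists m.+1 nat_lists.
Proof.
move=> hdeg v vn; apply: leq_trans (hdeg (inord v)); rewrite addn1 ltnS /path_deg.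
set s : seq 'I_m.+1 := map inord (nbrs m.+1 v).
have us : uniq s.
  rewrite map_inj_in_uniq ?nbrs_uniq // => x y.
  by rewrite !mem_nbrs => xv yv /(congr1 val); rewrite /= !inordK //; lia.
rewrite -(size_map (@inord m)) -/s -(card_uniqP us).
apply/subset_leq_card/subsetP => u /mapP [w wv ->].
by rewrite inE path_adj_nbrs !inordK //; move: wv; rewrite mem_nbrs; lia.
Qed.

Lemma has_free_nat_col f : unfrozen L f -> has_free m.+1 nat_lists (nat_col f).
Proof.
move=> [v nf]; exists (nat_of_ord v); first exact: ltn_ord.
apply: contraT => /hasPn frozen_v; case: nf => c cL cv.
have := frozen_v c; rewrite /nat_lists /nat_col inord_val => /(_ cL).
rewrite negb_and !negbK (negbTE (introN eqP cv)) orFb => /mapP [w wv ->].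
exists (inord w); split; last by [].
by rewrite path_adj_nbrs inordK //; move: wv (ltn_ord v); rewrite mem_nbrs; lia.
Qed.

Lemma four_colours_nat_lists : 4 <= union_size L -> four_colours m.+1 nat_lists.
Proof.
move=> hu; exists (undup (flatten [seq L v | v <- enum 'I_m.+1])); split=> // [|z].
  exact: undup_uniq.
rewrite mem_undup => /flattenP [s /mapP [v _ ->] zv].
by exists (nat_of_ord v); [exact: ltn_ord | rewrite /nat_lists inord_val].
Qed.

Lemma reconf_agree (f g : 'I_m.+1 -> nat) : is_Lcol L f -> f =1 g ->
  clos_refl_trans _ (@recol_step m.+1 L) f g.
Proof.
move=> [fL Hf] fg; have cg : is_Lcol L g by split=> [v|u v]; rewrite -!fg; [exact: fL | exact: Hf].
by apply: rt_step; split=> //; split=> //; exists ord0 => u _.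
Qed.
End Ordinals.

Theorem mainTheorem13 (n : nat) (L : 'I_n -> seq nat) (alpha beta : 'I_n -> nat) :
  3 <= n ->
  (forall v : 'I_n, path_deg v + 1 <= list_size (L v)) ->
  is_Lcol L alpha -> is_Lcol L beta ->
  unfrozen L alpha -> unfrozen L beta ->
  4 <= union_size L ->
  reconf L alpha beta.
Proof.
case: n L alpha beta => [//|m] L alpha beta _ hdeg ca cb ua ub hu.
have r := has_free_reach (ltn0Sn m) (deg_lists_nat_lists hdeg) (four_colours_nat_lists hu)
  (colouring_nat_col ca) (colouring_nat_col cb) (has_free_nat_col ua) (has_free_nat_col ub).
have ea : alpha =1 ord_col (nat_col alpha) by move=> i; rewrite /ord_col /nat_col inord_val.
have eb : ord_col (nat_col beta) =1 beta by move=> i; rewrite /ord_col /nat_col inord_val.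
have cb' := Lcol_ord_col (colouring_nat_col cb).
apply: clos_rt_rt1n; apply: rt_trans _ _ _ _ _ (reconf_agree ca ea) _.
exact: rt_trans _ _ _ _ _ (reconf_ord_col r) (reconf_agree cb' eb).
Qed.
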